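(* Let $m\ge2$ be an integer, $\theta=1-1/m$, $\theta<\mu<1$, and let $Z$ be distributed as $\theta-B$ where $B$ is Bernoulli with mean $\mu$. Let $\gamma>0$ be the Lundberg coefficient of $Z$, i.e. the positive solution of $\mathbb{E}[\exp(\gamma Z)]=1$. Then $$\frac{m}{m-1}\log\Bigl(\frac{\mu}{(1-\mu)(m-1)}\Bigr)\le\gamma\le\frac{2m}{m-1}\log\Bigl(\frac{\mu}{(1-\mu)(m-1)}\Bigr).$$ *)

From Stdlib Require Import Reals.
Open Scope R_scope.

(* Moment generating function E[exp(g Z)] of Z = theta - B, B ~ Bernoulli(mu):
   Z = theta with probability 1 - mu, Z = theta - 1 with probability mu. *)
Definition mgf_theta_minus_bernoulli (theta mu g : R) : R :=
  (1 - mu) * exp (g * theta) + mu * exp (g * (theta - 1)).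

(** With [m = n + 1] and [u = gamma / m], multiplying the Lundberg equation
    [(1 - mu) e^(n u) + mu e^(-u) = 1] by [e^u] and dividing by [e^u - 1]
    turns it into [e^u + e^(2u) + ... + e^(n u) = mu / (1 - mu)].  Hence
    [mu / ((1 - mu) (m - 1))] is the arithmetic mean of the [e^(k u)],
    [1 <= k <= n]: it is at most the largest term [e^(n u)], and by convexity
    of [exp] at least [e^((n + 1) u / 2) = e^(gamma / 2)].  Taking logarithms
    gives [gamma / 2 <= ln (mu / ((1 - mu) (m - 1))) <= (m - 1) gamma / m]. *)
From Stdlib Require Import Reals Lra Lia.
Open Scope R_scope.

Lemma le_ln_of_exp_le a b : exp a <= b -> a <= ln b.
Proof.
  intros Hab.
  apply Rnot_lt_le; intros Hlt.
  apply exp_increasing in Hlt.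
  rewrite exp_ln in Hlt by (pose proof (exp_pos a); lra).
  lra.
Qed.

Lemma ln_le_of_le_exp a b : 0 < a -> a <= exp b -> ln a <= b.
Proof.
  intros Ha Hab.
  apply Rnot_lt_le; intros Hlt.
  apply exp_increasing in Hlt.
  rewrite exp_ln in Hlt by exact Ha.
  lra.
Qed.

Lemma exp_le_exp_of_le x y : x <= y -> exp x <= exp y.
Proof.
  intros [Hlt | ->]; [now left; apply exp_increasing | apply Rle_refl].
Qed.

Fixpoint exp_sum (u : R) (n : nat) : R :=
  match n with
  | O => 0
  | S k => exp_sum u k + exp (INR (S k) * u)
  end.

Lemma exp_sum_geometric u n :
  (exp u - 1) * (1 + exp_sum u n) = exp (INR (S n) * u) - 1.
Proof.
  induction n as [|n IH]; cbn [exp_sum].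
  - simpl INR; rewrite Rmult_1_l; ring.
  - replace (INR (S (S n)) * u) with (u + INR (S n) * u)
      by (rewrite (S_INR (S n)); ring).
    rewrite exp_plus.
    replace ((exp u - 1) * (1 + (exp_sum u n + exp (INR (S n) * u))))
      with ((exp u - 1) * (1 + exp_sum u n) + (exp u - 1) * exp (INR (S n) * u))
      by ring.
    rewrite IH; ring.
Qed.

Lemma exp_sum_le_max u n : 0 <= u -> exp_sum u n <= INR n * exp (INR n * u).
Proof.
  intros Hu; induction n as [|n IH]; cbn [exp_sum].
  - simpl; lra.
  - assert (Hmono : exp (INR n * u) <= exp (INR (S n) * u)).
    { apply exp_le_exp_of_le; rewrite S_INR; nra. }
    pose proof (pos_INR n).
    rewrite S_INR in *; nra.
Qed.

(** Sum of the tangent-line bounds [e^c (1 + x - c) <= e^x] at [x = k u]. *)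
Lemma exp_sum_ge_tangent u c n :
  exp c * (INR n + u * INR n * (INR n + 1) / 2 - INR n * c) <= exp_sum u n.
Proof.
  induction n as [|n IH]; cbn [exp_sum].
  - simpl; lra.
  - assert (Htangent : exp c * (1 + (INR (S n) * u - c)) <= exp (INR (S n) * u)).
    { replace (exp (INR (S n) * u)) with (exp c * exp (INR (S n) * u - c))
        by (rewrite <- exp_plus; f_equal; ring).
      apply Rmult_le_compat_l; [left; apply exp_pos | apply exp_ineq1_le]. }
    rewrite S_INR in *; nra.
Qed.

Lemma exp_sum_ge_mean u n : INR n * exp (INR (S n) * u / 2) <= exp_sum u n.
Proof.
  pose proof (exp_sum_ge_tangent u (INR (S n) * u / 2) n) as Hsum.
  rewrite S_INR in *.
  replace (INR n + u * INR n * (INR n + 1) / 2 - INR n * ((INR n + 1) * u / 2))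
    with (INR n) in Hsum by field.
  lra.
Qed.

Lemma ln_exp_sum_mean_bounds u n :
  0 <= u -> (0 < n)%nat ->
  INR (S n) * u / 2 <= ln (exp_sum u n / INR n) <= INR n * u.
Proof.
  intros Hu Hn.
  apply lt_0_INR in Hn.
  pose proof (exp_sum_ge_mean u n) as Hge.
  pose proof (exp_pos (INR (S n) * u / 2)).
  split.
  - apply le_ln_of_exp_le.
    apply (Rmult_le_reg_r (INR n)); [exact Hn|].
    unfold Rdiv at 2; rewrite Rmult_assoc, Rinv_l by lra; lra.
  - apply ln_le_of_le_exp.
    + apply Rdiv_lt_0_compat; nra.
    + pose proof (exp_sum_le_max u n Hu).
      apply (Rmult_le_reg_r (INR n)); [exact Hn|].
      unfold Rdiv; rewrite Rmult_assoc, Rinv_l by lra; lra.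
Qed.

Lemma lundberg_eq_exp_sum n mu g :
  g <> 0 -> mu < 1 ->
  mgf_theta_minus_bernoulli (1 - 1 / INR (S n)) mu g = 1 ->
  exp_sum (g / INR (S n)) n = mu / (1 - mu).
Proof.
  intros Hg Hmu Heq.
  pose proof (lt_0_INR (S n) ltac:(lia)) as Hm.
  set (u := g / INR (S n)).
  assert (Hgu : g = INR (S n) * u) by (unfold u; field; lra).
  assert (Hu1 : exp u - 1 <> 0).
  { intros Hexp; apply Hg.
    assert (Hu0 : u = 0) by (apply exp_inv; rewrite exp_0; lra).
    rewrite Hgu, Hu0; ring. }
  assert (Hshift : (1 - mu) * exp (INR (S n) * u) + mu = exp u).
  { unfold mgf_theta_minus_bernoulli in Heq.
    replace (g * (1 - 1 / INR (S n))) with (INR (S n) * u + - u) in Heq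
      by (rewrite Hgu; field; lra).
    replace (g * (1 - 1 / INR (S n) - 1)) with (- u) in Heq
      by (rewrite Hgu; field; lra).
    rewrite exp_plus, exp_Ropp in Heq.
    pose proof (exp_pos u).
    transitivity (exp u * ((1 - mu) * (exp (INR (S n) * u) * / exp u) + mu * / exp u)).
    - field; lra.
    - rewrite Heq; ring. }
  assert (Hsum : (1 - mu) * (1 + exp_sum u n) = 1).
  { apply (Rmult_eq_reg_l (exp u - 1)); [|exact Hu1].
    rewrite <- Rmult_assoc, (Rmult_comm _ (1 - mu)), Rmult_assoc,
      exp_sum_geometric.
    lra. }
  apply (Rmult_eq_reg_l (1 - mu)); [|lra].
  field_simplify; lra.
Qed.

Theorem lemma5 (m : nat) (mu gamma : R) :
  (2 <= m)%nat ->
  1 - 1 / INR m < mu -> mu < 1 ->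
  0 < gamma ->
  mgf_theta_minus_bernoulli (1 - 1 / INR m) mu gamma = 1 ->
  INR m / (INR m - 1) * ln (mu / ((1 - mu) * (INR m - 1))) <= gamma /\
  gamma <= 2 * INR m / (INR m - 1) * ln (mu / ((1 - mu) * (INR m - 1))).
Proof.
  (* [theta < mu] only ensures that a positive root [gamma] exists. *)
  intros Hm _ Hmu Hg Heq.
  destruct m as [|n]; [lia|].
  pose proof (le_INR 1 n ltac:(lia)) as Hn; simpl INR in Hn at 1.
  pose proof (lundberg_eq_exp_sum n mu gamma ltac:(lra) Hmu Heq) as Hsum.
  set (u := gamma / INR (S n)) in Hsum.
  assert (Hmean : mu / ((1 - mu) * (INR (S n) - 1)) = exp_sum u n / INR n).
  { rewrite Hsum, S_INR; field; lra. }
  pose proof (ln_exp_sum_mean_bounds u n) as Hbounds.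
  rewrite <- Hmean in Hbounds.
  unfold u in Hbounds; rewrite S_INR in *.
  set (L := ln (mu / ((1 - mu) * (INR n + 1 - 1)))) in *.
  replace ((INR n + 1) * (gamma / (INR n + 1)) / 2) with (gamma / 2)
    in Hbounds by (field; lra).
  destruct Hbounds as [Hlow Hup]; [left; apply Rdiv_lt_0_compat; lra | lia |].
  replace (INR n + 1 - 1) with (INR n) by ring.
  split.
  - replace gamma with ((INR n + 1) / INR n * (INR n * (gamma / (INR n + 1))))
      by (field; lra).
    apply Rmult_le_compat_l; [left; apply Rdiv_lt_0_compat|]; lra.
  - replace (2 * (INR n + 1) / INR n * L) with (2 * L + 2 * (L / INR n))
      by (field; lra).
    assert (0 <= L / INR n) by (left; apply Rdiv_lt_0_compat; lra).
    lra.
Qed.
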